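(* Fix an integer $K\ge 1$ and $r\in(0,1/2)$. For the synchronous space-time-coded decode-and-forward relay network with $K$ relays described in the context, the end-to-end outage probability satisfies $$d_{stc}(r):=\lim_{\mathrm{SNR}\to\infty}-\frac{\log \Pr\left[I_{stc}<R(\mathrm{SNR})\right]}{\log \mathrm{SNR}}=(K+1)(1-2r).$$ In other words, the lower bound $(K+1)(1-2r)\le d_{stc}(r)$ is tight.
   Context: Network: a source $N_S$, $K$ relays $N_{R_1},\dots,N_{R_K}$ and a destination $N_D$. For each transmitter/receiver pair $(i,j)$ with $i\in\{S,R_1,\dots,R_K\}$ and $j\in\{R_1,\dots,R_K,D\}$, $i\neq j$, the channel gain $\alpha_{i,j}$ is a zero-mean circularly symmetric complex Gaussian random variable with variance $\sigma^2_{i,j}>0$. All gains are mutually independent, so $|\alpha_{i,j}|^2$ is exponentially distributed with parameter $\lambda_{i,j}=1/\sigma^2_{i,j}$. For $\mathrm{SNR}>0$ set $\rho_0=\frac{2}{K+1}\mathrm{SNR}$. The target rate is $R=R(\mathrm{SNR})=r\log(1+\mathrm{SNR}\,\sigma^2_{S,D})$, where $r$ is the multiplexing gain. All logarithms are taken in one fixed base. Transmission has two phases. - Phase 1: the source broadcasts. Relay $R_k$ decodes successfully iff $I_{S,R_k}:=\frac12\log(1+\rho_0|\alpha_{S,R_k}|^2)\ge R$. The random decoding set $\mathcal D(s)$ is the set of successful relays. - Phase 2: the relays in $\mathcal D(s)$ transmit, jointly encoding with i.i.d. complex Gaussian codebooks that are independent of the source codebook and perfectly symbol-synchronized. Conditioned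 on $\mathcal D(s)$, the end-to-end mutual information is $$I_{stc}=\frac12\log\left(1+\rho_0|\alpha_{S,D}|^2\right)+\frac12\log\left(1+\rho_0\sum_{R_k\in\mathcal D(s)}|\alpha_{R_k,D}|^2\right),$$ where an empty sum equals $0$. The probability $\Pr[I_{stc}<R]$ averages over the gains, including the randomness of $\mathcal D(s)$. *)

From HB Require Import structures.
From mathcomp Require Import all_boot all_order all_algebra.
From mathcomp Require Import all_classical all_reals all_analysis.
Set Implicit Arguments. Unset Strict Implicit. Unset Printing Implicit Defensive.
Import Order.TTheory GRing.Theory Num.Theory.
Import numFieldNormedType.Exports.
Local Open Scope classical_set_scope.
Local Open Scope ring_scope.

(* Nodes of the network: 'I_(K.+2); node 0 = source N_S, node K+1 = N_D,
   node k (1 <= k <= K) = relay N_{R_k}. *)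
Definition src {K : nat} : 'I_(K.+2) := ord0.
Definition dst {K : nat} : 'I_(K.+2) := ord_max.
Definition relay {K : nat} (k : 'I_K) : 'I_(K.+2) := inord k.+1.

Definition link {K : nat} (p : 'I_(K.+2) * 'I_(K.+2)) : bool :=
  [&& p.1 != dst, p.2 != src & p.1 != p.2].

Definition mutually_independent {d} {T : measurableType d} {R : realType}
  (P : probability T R) {I : finType} (A : pred I) (X : I -> T -> R) : Prop :=
  forall B : I -> set R, (forall i, A i -> measurable (B i)) ->
    P [set w | forall i, A i -> B i (X i w)] =
    (\prod_(i | A i) P (X i @^-1` B i))%E.

Definition exponential_rv {d} {T : measurableType d} {R : realType}
  (P : probability T R) (X : T -> R) (lam : R) : Prop :=
  forall x : R, P [set w | X w <= x] =
    (if x < 0 then 0 else 1 - expR (- (lam * x)))%:E.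

Definition rho0 {R : realType} (K : nat) (snr : R) : R := 2 / (K.+1)%:R * snr.

Definition rate {R : realType} (r sSD snr : R) : R := r * ln (1 + snr * sSD).

Section Network.
Context {d} {T : measurableType d} {R : realType} {K : nat}.
Variable g : 'I_(K.+2) -> 'I_(K.+2) -> T -> R.  (* g i j w = |alpha_{i,j}|^2 *)
Variables (sigma2 : 'I_(K.+2) -> 'I_(K.+2) -> R) (r : R).

Definition decodes (snr : R) (w : T) (k : 'I_K) : bool :=
  (1/2) * ln (1 + rho0 K snr * g src (relay k) w) >= rate r (sigma2 src dst) snr.

Definition I_stc (snr : R) (w : T) : R :=
  (1/2) * ln (1 + rho0 K snr * g src dst w) +
  (1/2) * ln (1 + rho0 K snr * \sum_(k < K | decodes snr w k) g (relay k) dst w).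

Definition outage_event (snr : R) : set T :=
  [set w | I_stc snr w < rate r (sigma2 src dst) snr].
End Network.

From HB Require Import structures.
From mathcomp Require Import all_boot all_order all_algebra.
From mathcomp Require Import all_classical all_reals all_analysis.
From mathcomp Require Import ring lra.
Set Implicit Arguments. Unset Strict Implicit. Unset Printing Implicit Defensive.
Import Order.TTheory GRing.Theory Num.Theory.
Import numFieldNormedType.Exports.
Local Open Scope classical_set_scope.
Local Open Scope ring_scope.

(* The threshold [t(SNR)] is the gain below which a link with receive SNR
   [rho0 * gain] cannot carry the rate [R(SNR)]; it is of order SNR^(2r-1).
   For the realized decoding set, an outage forces the direct link and, for
   every relay, its relay-destination link (if it decoded) or its source-relay
   link (if not) below [t]; conversely, if the direct link and all source-relay
   links are below [t/2], no relay decodes and an outage occurs.  By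
   independence these events have probability a product of K+1 exponential
   cdfs [1 - exp (-lambda t) = Theta(t)], so the outage probability is
   Theta(t^(K+1)) = Theta(SNR^(-(K+1)(1-2r))). *)

Lemma relay_val (K : nat) (k : 'I_K) : val (relay k) = k.+1.
Proof. by apply: inordK; rewrite ltnS ltnW // ltnS. Qed.

Lemma relay_inj (K : nat) : injective (@relay K).
Proof. by move=> k1 k2 /(congr1 val); rewrite !relay_val => -[] /val_inj. Qed.

Lemma relay_neq_src (K : nat) (k : 'I_K) : relay k != src.
Proof. by rewrite -val_eqE relay_val. Qed.

Lemma relay_neq_dst (K : nat) (k : 'I_K) : relay k != dst.
Proof. by rewrite -val_eqE relay_val /= eqSS neq_ltn ltn_ord. Qed.

Lemma link_src_dst (K : nat) : link (@src K, @dst K).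
Proof. by []. Qed.

Lemma link_src_relay (K : nat) (k : 'I_K) : link (src, relay k).
Proof. by rewrite /link /= relay_neq_src eq_sym relay_neq_src. Qed.

Lemma link_relay_dst (K : nat) (k : 'I_K) : link (relay k, dst).
Proof. by rewrite /link /= relay_neq_dst. Qed.

(* The K+1 links that must all be weak for an outage under the decoding
   pattern [D]; [None] stands for the direct link. *)
Definition bottleneck (K : nat) (D : {ffun 'I_K -> bool}) (o : option 'I_K) :
    'I_(K.+2) * 'I_(K.+2) :=
  if o is Some k then (if D k then (relay k, dst) else (src, relay k))
  else (src, dst).

Lemma bottleneck_link (K : nat) (D : {ffun 'I_K -> bool}) o :
  link (bottleneck D o).
Proof.
case: o => [k|] //=; case: (D k); [exact: link_relay_dst | exact: link_src_relay].
Qed.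

Lemma bottleneck_inj (K : nat) (D : {ffun 'I_K -> bool}) :
  injective (bottleneck D).
Proof.
have nsrc (k : 'I_K) : relay k <> src by apply/eqP; exact: relay_neq_src.
have ndst (k : 'I_K) : relay k <> dst by apply/eqP; exact: relay_neq_dst.
move=> [k1|] [k2|] //=.
- case: (D k1); case: (D k2); move=> /pair_equal_spec[e1 e2].
  + by rewrite (relay_inj e1).
  + by case: (nsrc _ e1).
  + by case: (nsrc _ (esym e1)).
  + by rewrite (relay_inj e2).
- by case: (D k1) => /pair_equal_spec[e1 e2]; [case: (nsrc _ e1) | case: (ndst _ e2)].
- case: (D k2) => /pair_equal_spec[e1 e2].
  + by case: (nsrc _ (esym e1)).
  + by case: (ndst _ (esym e2)).
Qed.

Lemma le_measure_fin_bigcup (d : measure_display) (T : measurableType d)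
    (R : realType) (mu : {measure set T -> \bar R}) (I : finType) (Q : pred I)
    (A : I -> set T) :
  (forall i, Q i -> measurable (A i)) ->
  (mu (\bigcup_(i in [set i | Q i]) A i) <= \sum_(i | Q i) mu (A i))%E.
Proof.
move=> mA; rewrite (_ : [set i | Q i] = [set i | (i \in index_enum I) && Q i]).
  rewrite bigcup_seq_cond; elim: (index_enum I) => [|i s IH].
    by rewrite !big_nil measure0.
  rewrite !big_cons; case: ifP => Qi //.
  apply: le_trans (measureU2 _ _ _) _; [exact: mA | exact: bigsetU_measurable |].
  exact: leeD2l.
by apply/seteqP; split => i /=; rewrite mem_index_enum.
Qed.

Lemma exponential_rv_le (d : measure_display) (T : measurableType d) (R : realType)
    (P : probability T R) (X : T -> R) (lam x : R) :
  exponential_rv P X lam -> 0 <= x ->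
  P [set w | X w <= x] = (1 - expR (- (lam * x)))%:E.
Proof. by move=> hX x0; rewrite hX ltNge x0. Qed.

Definition lambda (R : realType) (K : nat) (sigma2 : 'I_(K.+2) -> 'I_(K.+2) -> R)
    (p : 'I_(K.+2) * 'I_(K.+2)) : R :=
  (sigma2 p.1 p.2)^-1.

Definition threshold (R : realType) (K : nat) (r s snr : R) : R :=
  (expR (2 * rate r s snr) - 1) / rho0 K snr.

(* No positivity of [1 + rho * x] is needed: [ln] vanishes on nonpositive reals. *)
Lemma half_ln1pM_lt (R : realType) (c rho x : R) : 0 < c -> 0 < rho ->
  x < (expR (2 * c) - 1) / rho -> 1 / 2 * ln (1 + rho * x) < c.
Proof.
move=> c0 rho0; rewrite ltr_pdivlMr // mulrC => hx.
have [pos|npos] := ltP 0 (1 + rho * x); last by rewrite ln0 //; lra.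
suff : ln (1 + rho * x) < 2 * c by lra.
by rewrite -ltr_expR lnK ?posrE //; lra.
Qed.

Lemma lt_of_half_ln1pM_lt (R : realType) (c rho x : R) : 0 < rho ->
  0 < 1 + rho * x -> 1 / 2 * ln (1 + rho * x) < c -> x < (expR (2 * c) - 1) / rho.
Proof.
move=> rho0 pos hc; rewrite ltr_pdivlMr // mulrC.
suff : 1 + rho * x < expR (2 * c) by lra.
by rewrite -[X in X < _](lnK (pos : _ \is Num.pos)) ltr_expR; lra.
Qed.

Lemma rho0_gt0 (R : realType) (K : nat) (snr : R) : 0 < snr -> 0 < rho0 K snr.
Proof. by move=> snr0; rewrite mulr_gt0 // divr_gt0 // ltr0Sn. Qed.

Lemma rate_gt0 (R : realType) (r s snr : R) : 0 < r -> 0 < s -> 0 < snr ->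
  0 < rate r s snr.
Proof. by move=> r0 s0 snr0; rewrite mulr_gt0 // ln_gt0 // ltrDl mulr_gt0. Qed.

Lemma threshold_gt0 (R : realType) (K : nat) (r s snr : R) : 0 < r -> 0 < s ->
  0 < snr -> 0 < threshold K r s snr.
Proof.
move=> r0 s0 snr0; rewrite divr_gt0 ?rho0_gt0 // subr_gt0 -expR0 ltr_expR.
by rewrite mulr_gt0 ?rate_gt0.
Qed.

Lemma measurable_fun_mul_ln1pM (d : measure_display) (T : measurableType d)
    (R : realType) (a b : R) (h : T -> R) :
  measurable_fun setT h -> measurable_fun setT (fun w => a * ln (1 + b * h w)).
Proof.
move=> mh; apply: (measurableT_comp (f := fun x => a * ln (1 + b * x))) mh.
apply: measurable_realfun.measurable_funM => //.
apply: measurableT_comp; first exact: measurable_realfun.measurable_ln.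
exact: measurable_realfun.measurable_funD.
Qed.

Lemma one_sub_expN_le (R : realType) (y : R) : 1 - expR (- y) <= y.
Proof. by have := expR_ge1Dx (- y); lra. Qed.

Lemma one_sub_expN_ge0 (R : realType) (y : R) : 0 <= y -> 0 <= 1 - expR (- y).
Proof. by move=> y0; rewrite subr_ge0 -expR0 ler_expR; lra. Qed.

Lemma half_le_one_sub_expN (R : realType) (y : R) : 0 <= y <= 1 ->
  y / 2 <= 1 - expR (- y).
Proof.
move=> /andP[y0 y1]; rewrite expRN.
have : (expR y)^-1 <= (1 + y)^-1 by rewrite lef_pV2 ?posrE ?expR_ge1Dx ?expR_gt0 //; lra.
suff : (1 + y)^-1 <= 1 - y / 2 by lra.
by rewrite -[X in X <= _]mul1r ler_pdivrMr; [nra | lra].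
Qed.

Section ProductOfExponentialCdfs.
Variables (R : realType) (I : finType) (lam : I -> R) (L t : R).
Hypotheses (lam_bound : forall i, 0 <= lam i <= L) (t_ge0 : 0 <= t).

Lemma prod_one_sub_expN_le :
  \prod_i (1 - expR (- (lam i * t))) <= (L * t) ^+ #|I|.
Proof.
rewrite -prodr_const; apply: ler_prod => i _; have /andP[l0 lL] := lam_bound i.
rewrite one_sub_expN_ge0 ?mulr_ge0 //=.
exact: le_trans (one_sub_expN_le _) (ler_wpM2r t_ge0 lL).
Qed.

Lemma prod_one_sub_expN_ge : L * t <= 1 ->
  \prod_i (lam i / 2) * t ^+ #|I| <= \prod_i (1 - expR (- (lam i * t))).
Proof.
move=> Lt1; rewrite -prodr_const -big_split; apply: ler_prod => i _ /=.
have /andP[l0 lL] := lam_bound i.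
rewrite mulr_ge0 ?divr_ge0 //= mulrAC; apply: half_le_one_sub_expN.
by rewrite mulr_ge0 //= (le_trans _ Lt1) // ler_wpM2r.
Qed.

End ProductOfExponentialCdfs.

Section Outage.
Context {d : measure_display} {T : measurableType d} {R : realType} {K : nat}.
Variables (g : 'I_(K.+2) -> 'I_(K.+2) -> T -> R)
  (sigma2 : 'I_(K.+2) -> 'I_(K.+2) -> R) (r : R).

Definition weak_event (D : {ffun 'I_K -> bool}) (t : R) : set T :=
  [set w | forall o, g (bottleneck D o).1 (bottleneck D o).2 w <= t].

(* A null event, off which all gains are nonnegative. *)
Definition degenerate_event : set T :=
  \bigcup_(p in [set p | link p]) [set w | g p.1 p.2 w <= 0].

Hypothesis g_measurable : forall i j, link (i, j) -> measurable_fun setT (g i j).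

Lemma measurable_gain_le p (t : R) : link p -> measurable [set w | g p.1 p.2 w <= t].
Proof.
case: p => i j lp.
by have := g_measurable lp measurableT (measurable_itv `]-oo, t]); rewrite setTI set_itvNyc.
Qed.

Lemma measurable_weak_event D t : measurable (weak_event D t).
Proof.
rewrite (_ : weak_event D t =
    \bigcap_o [set w | g (bottleneck D o).1 (bottleneck D o).2 w <= t]).
  apply: fin_bigcap_measurable => [|o _]; first exact: finite_finset.
  exact/measurable_gain_le/bottleneck_link.
by apply/seteqP; split => w /= hw o; [move=> _; exact: hw | exact: hw].
Qed.

Lemma measurable_degenerate_event : measurable degenerate_event.
Proof.
apply: fin_bigcup_measurable => [|p lp]; first exact: finite_finset.
exact: measurable_gain_le.
Qed.

Lemma measurable_outage_event snr : measurable (outage_event g sigma2 r snr).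
Proof.
have mI : measurable_fun setT (I_stc g sigma2 r snr).
  apply: measurable_realfun.measurable_funD.
    exact/measurable_fun_mul_ln1pM/g_measurable/link_src_dst.
  apply: measurable_fun_mul_ln1pM.
  under eq_fun => w do rewrite big_mkcond /=.
  apply: measurable_sum => k; apply: measurable_fun_ifT => //.
    apply: measurable_realfun.measurable_fun_ler => //.
    exact/measurable_fun_mul_ln1pM/g_measurable/link_src_relay.
  exact/g_measurable/link_relay_dst.
have := mI measurableT _ (measurable_itv `]-oo, rate r (sigma2 src dst) snr[).
by rewrite setTI set_itvNyo.
Qed.

Variable P : probability T R.
Hypothesis g_exponential :
  forall i j, link (i, j) -> exponential_rv P (g i j) (sigma2 i j)^-1.
Hypothesis g_independent : mutually_independent P link (fun p => g p.1 p.2).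

Lemma prob_weak_event D t : 0 <= t ->
  P (weak_event D t) =
  (\prod_o (1 - expR (- (lambda sigma2 (bottleneck D o) * t))))%:E.
Proof.
move=> t0; set S := [set bottleneck D o | o : option 'I_K]%SET.
have S_link p : p \in S -> link p.
  by rewrite /S; case/imsetP => o _ ->; exact: bottleneck_link.
(* Constrain every link, trivially off the bottlenecks, to apply independence. *)
set B := fun p => if p \in S then [set x : R | x <= t] else setT.
have -> : weak_event D t = [set w | forall p, link p -> B p (g p.1 p.2 w)].
  apply/seteqP; split => w hw.
  - move=> p lp; rewrite /B; case: ifP => [pS|//].
    by move: pS; rewrite /S; case/imsetP => o _ ->; exact: hw.
  - by move=> o; have := hw _ (bottleneck_link D o); rewrite /B imset_f ?in_setT.
rewrite g_independent => [|p _]; last first.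
  by rewrite /B; case: ifP => _; [rewrite -set_itvNyc; exact: measurable_itv|].
set F := fun p => if p \in S then 1 - expR (- (lambda sigma2 p * t)) else 1.
rewrite (eq_bigr (fun p => (F p)%:E)) => [|[i j] lp]; last first.
  rewrite /B /F; case: ifP => _; last by rewrite preimage_setT probability_setT.
  exact: exponential_rv_le (g_exponential lp) t0.
rewrite prodEFin big_mkcond /=; congr EFin.
rewrite (eq_bigr F) => [|p _]; last first.
  by rewrite /F; case: (boolP (p \in S)) => [/S_link -> //|_]; case: (link p).
by rewrite -big_mkcond big_imset //= => o1 o2 _ _; exact: bottleneck_inj.
Qed.

Lemma prob_degenerate_event : P degenerate_event = 0.
Proof.
apply/le_anti; rewrite measure_ge0 andbT.
apply: le_trans (le_measure_fin_bigcup P (fun p (lp : link p) => measurable_gain_le 0 lp)) _.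
rewrite big1 // => -[i j] lp.
by rewrite /= (exponential_rv_le (g_exponential lp)) // mulr0 oppr0 expR0 subrr.
Qed.

Hypotheses (r_gt0 : 0 < r) (sigma2_gt0 : forall i j, link (i, j) -> 0 < sigma2 i j).

Definition lambda_total : R := \sum_(p | link p) lambda sigma2 p.

Lemma lambda_gt0 p : link p -> 0 < lambda sigma2 p.
Proof. by case: p => i j lp; rewrite invr_gt0 sigma2_gt0. Qed.

Lemma lambda_bound p : link p -> 0 <= lambda sigma2 p <= lambda_total.
Proof.
move=> lp; rewrite ltW ?lambda_gt0 //= /lambda_total (bigD1 p) //= lerDl.
by rewrite sumr_ge0 // => q /andP[lq _]; exact/ltW/lambda_gt0.
Qed.

Lemma lambda_total_gt0 : 0 < lambda_total.
Proof.
apply: lt_le_trans (lambda_gt0 (link_src_dst K)) _.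
by have /andP[] := lambda_bound (link_src_dst K).
Qed.

Section FixedSNR.
Variable snr : R.
Hypothesis snr_gt0 : 0 < snr.

Let t := threshold K r (sigma2 src dst) snr.
Let rho_gt0 : 0 < rho0 K snr := rho0_gt0 K snr_gt0.
Let rate_pos : 0 < rate r (sigma2 src dst) snr :=
  rate_gt0 r_gt0 (sigma2_gt0 (link_src_dst K)) snr_gt0.
Let t_gt0 : 0 < t := threshold_gt0 K r_gt0 (sigma2_gt0 (link_src_dst K)) snr_gt0.

Lemma weak_event_sub_outage :
  weak_event [ffun=> false] (t / 2) `<=` outage_event g sigma2 r snr.
Proof.
move=> w hw; have small o :
    g (bottleneck [ffun=> false] o).1 (bottleneck [ffun=> false] o).2 w < t.
  by apply: le_lt_trans (hw o) _; have := t_gt0; lra.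
have no_decoding k : decodes g sigma2 r snr w k = false.
  apply/negbTE; rewrite /decodes -ltNge.
  by apply: half_ln1pM_lt rate_pos rho_gt0 _; have := small (Some k); rewrite /= ffunE.
rewrite /outage_event /I_stc /= big_pred0 => [|k]; last exact: no_decoding.
rewrite mulr0 addr0 ln1 mulr0 addr0.
exact: half_ln1pM_lt rate_pos rho_gt0 (small None).
Qed.

Lemma outage_sub_weak_events :
  outage_event g sigma2 r snr `<=` degenerate_event `|` \bigcup_D weak_event D t.
Proof.
move=> w hw; have [deg|nondeg] := pselect (degenerate_event w); [by left|right].
have gain_ge0 p : link p -> 0 <= g p.1 p.2 w.
  by move=> lp; rewrite leNgt; apply/negP => /ltW le0; apply: nondeg; exists p.
have pos_arg x : 0 <= x -> 0 < 1 + rho0 K snr * x.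
  by move=> x0; rewrite ltr_pwDl // mulr_ge0 // ltW.
have half_ln_ge0 x : 0 <= x -> 0 <= 1 / 2 * ln (1 + rho0 K snr * x).
  by move=> x0; rewrite mulr_ge0 // ln_ge0 // lerDl mulr_ge0 // ltW.
have below_rate p : link p -> 1 / 2 * ln (1 + rho0 K snr * g p.1 p.2 w) <
    rate r (sigma2 src dst) snr -> g p.1 p.2 w <= t.
  by move=> lp /lt_of_half_ln1pM_lt lt; apply/ltW/lt => //; exact/pos_arg/gain_ge0.
set S := \sum_(k < K | decodes g sigma2 r snr w k) g (relay k) dst w.
have S_ge0 : 0 <= S.
  by rewrite sumr_ge0 // => k _; exact: (gain_ge0 _ (link_relay_dst k)).
have S_ge k : decodes g sigma2 r snr w k -> g (relay k) dst w <= S.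
  move=> dec; rewrite /S (bigD1 k) //= lerDl sumr_ge0 // => j _.
  exact: (gain_ge0 _ (link_relay_dst j)).
move: hw; rewrite /outage_event /I_stc /= -/S => hw.
have direct := half_ln_ge0 _ (gain_ge0 _ (link_src_dst K)).
have relayed := half_ln_ge0 _ S_ge0.
exists [ffun k => decodes g sigma2 r snr w k] => // -[k|]; last first.
  by apply: below_rate (link_src_dst K) _; lra.
rewrite /= ffunE; case: ifP => dec; last first.
  by apply: below_rate (link_src_relay k) _; move/negbT: dec; rewrite /decodes -ltNge.
apply: below_rate (link_relay_dst k) _.
apply: le_lt_trans (_ : _ <= 1 / 2 * ln (1 + rho0 K snr * S)) _.
  have gk := gain_ge0 _ (link_relay_dst k).
  by rewrite ler_pM2l // ler_ln ?posrE ?pos_arg // lerD2l ler_wpM2l ?S_ge // ltW.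
lra.
Qed.

Lemma outage_prob_le :
  (P (outage_event g sigma2 r snr) <= (2 ^+ K * (lambda_total * t) ^+ K.+1)%:E)%E.
Proof.
have mweak D : measurable (weak_event D t) by exact: measurable_weak_event.
have mU : measurable (\bigcup_D weak_event D t).
  by apply: fin_bigcup_measurable => [|D _]; [exact: finite_finset | exact: mweak].
have weak : (P (\bigcup_D weak_event D t) <=
    \sum_D (\prod_o (1 - expR (- (lambda sigma2 (bottleneck D o) * t))))%:E)%E.
  rewrite (_ : [set: {ffun 'I_K -> bool}] = [set D | predT D]); last exact/seteqP.
  apply: le_trans (le_measure_fin_bigcup P (fun D (_ : predT D) => mweak D)) _.
  by rewrite (eq_bigr _ (fun D _ => prob_weak_event D (ltW t_gt0))).
apply: le_trans (le_measure _ _ _ outage_sub_weak_events) _; rewrite ?inE.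
- exact: measurable_outage_event.
- exact: measurableU measurable_degenerate_event mU.
apply: le_trans (measureU2 _ measurable_degenerate_event mU) _.
have null : (P degenerate_event <= 0)%E by rewrite prob_degenerate_event.
apply: le_trans (leeD null weak) _; rewrite add0e sumEFin lee_fin.
have prod_le D : \prod_o (1 - expR (- (lambda sigma2 (bottleneck D o) * t))) <=
    (lambda_total * t) ^+ K.+1.
  have := prod_one_sub_expN_le (fun o => lambda_bound (bottleneck_link D o)) (ltW t_gt0).
  by rewrite card_option card_ord.
apply: le_trans (ler_sum _ (fun D _ => prod_le D)) _.
by rewrite sumr_const card_ffun card_bool card_ord -[_ *+ 2 ^ K]mulr_natl natrX.
Qed.

Lemma outage_prob_ge : lambda_total * t <= 1 ->
  (((\prod_o (lambda sigma2 (bottleneck [ffun=> false] o) / 2)) * (t / 2) ^+ K.+1)%:E <=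
   P (outage_event g sigma2 r snr))%E.
Proof.
move=> Lt1; have t2 : 0 <= t / 2 by rewrite divr_ge0 // ltW.
apply: (@le_trans _ _ (P (weak_event [ffun=> false] (t / 2)))).
  rewrite prob_weak_event // lee_fin.
  have Lt2 : lambda_total * (t / 2) <= 1.
    by have := lambda_bound (link_src_dst K); have := t_gt0; nra.
  have lam_bound o := lambda_bound (bottleneck_link [ffun=> false] o).
  by have := prod_one_sub_expN_ge lam_bound t2 Lt2; rewrite card_option card_ord.
apply: le_measure weak_event_sub_outage; rewrite inE.
- exact: measurable_weak_event.
- exact: measurable_outage_event.
Qed.

End FixedSNR.

Lemma outage_prob_sandwich : exists c1 c2 : R, 0 < c1 /\
  forall snr, 0 < snr -> lambda_total * threshold K r (sigma2 src dst) snr <= 1 ->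
    c1 * threshold K r (sigma2 src dst) snr ^+ K.+1 <=
    fine (P (outage_event g sigma2 r snr)) <=
    c2 * threshold K r (sigma2 src dst) snr ^+ K.+1.
Proof.
exists ((\prod_o (lambda sigma2 (bottleneck [ffun=> false] o) / 2)) / 2 ^+ K.+1).
exists (2 ^+ K * lambda_total ^+ K.+1); split.
  rewrite divr_gt0 ?exprn_gt0 // prodr_gt0 // => o _.
  by rewrite divr_gt0 // lambda_gt0 // bottleneck_link.
move=> snr snr0 Lt1.
have := outage_prob_le snr0; have := outage_prob_ge snr0 Lt1.
case: (P _) => [q||] //=; rewrite ?leye_eq ?leeNy_eq // !lee_fin => lo up.
rewrite expr_div_n mulrA mulrAC in lo; rewrite exprMn mulrA in up.
by rewrite lo up.
Qed.

End Outage.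

Lemma nbhs_pinfty_ln_ge (R : realType) (A : R) : \forall s \near +oo, A <= ln s.
Proof.
near=> s; have As : expR A <= s by near: s; apply: nbhs_pinfty_ge; rewrite num_real.
by rewrite -[A]expRK ler_ln ?posrE ?(lt_le_trans (expR_gt0 A)) ?expR_gt0.
Unshelve. all: by end_near.
Qed.

Lemma cvg_div_ln (R : realType) (c a b : R) (x : R -> R) :
  (\forall s \near +oo, a <= x s - c * ln s <= b) ->
  x s / ln s @[s --> +oo] --> c.
Proof.
move=> gap; apply/cvgrPdist_le => e e0.
near=> s; have /andP[ga gb] : a <= x s - c * ln s <= b by near: s.
have lnB : (`|a| + `|b|) / e + 1 <= ln s by near: s; exact: nbhs_pinfty_ln_ge.
have B0 : 0 <= (`|a| + `|b|) / e by rewrite divr_ge0 // ltW.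
have ln0 : 0 < ln s by lra.
rewrite (_ : c - x s / ln s = - ((x s - c * ln s) / ln s)); last by field; rewrite gt_eqF.
rewrite normrN normrM normfV (gtr0_norm ln0) ler_pdivrMr // ler_norml.
have := ler_wpM2l (ltW e0) lnB; rewrite mulrDr mulr1 mulrCA mulfV ?gt_eqF // mulr1.
have := ler_norm b; have := normr_ge0 a; have := normr_ge0 b; have := ler_norm (- a).
rewrite normrN.
by move=> *; apply/andP; split; lra.
Unshelve. all: by end_near.
Qed.

Lemma ln1pM_bounds (R : realType) (x s : R) : 1 <= x -> 0 < s ->
  ln x + ln s <= ln (1 + x * s) <= ln x + ln (1 + s).
Proof.
move=> x1 s0; have x0 : 0 < x by lra.
have s1 : 0 < 1 + s by lra.
rewrite -!lnM ?posrE // !ler_ln ?posrE ?addr_gt0 ?mulr_gt0 //.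
by apply/andP; split; nra.
Qed.

Lemma ln_expR_sub1_bounds (R : realType) (y : R) : ln 2 <= y ->
  y - ln 2 <= ln (expR y - 1) <= y.
Proof.
move=> y2; have e2 : 2 <= expR y by rewrite -[2](@lnK R) ?posrE // ler_expR.
have -> : y - ln 2 = ln (expR y / 2) by rewrite ln_div ?posrE ?expR_gt0 // expRK.
apply/andP; split; last rewrite -[X in _ <= X]expRK.
all: by rewrite ler_ln ?posrE ?divr_gt0 ?expR_gt0 //; lra.
Qed.

Lemma ln_threshold (R : realType) (K : nat) (r s snr : R) :
  0 < r -> 0 < s -> 0 < snr ->
  ln (threshold K r s snr) =
  ln (expR (2 * rate r s snr) - 1) - ln (2 / K.+1%:R) - ln snr.
Proof.
move=> r0 s0 snr0; have rate0 := rate_gt0 r0 s0 snr0.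
have M1 : 0 < expR (2 * rate r s snr) - 1.
  by rewrite subr_gt0 -expR0 ltr_expR mulr_gt0.
rewrite ln_div ?posrE ?rho0_gt0 // lnM ?posrE ?divr_gt0 ?ltr0Sn //; lra.
Qed.

Lemma ln_threshold_gap (R : realType) (K : nat) (r s : R) : 0 < r -> 0 < s ->
  \forall snr \near +oo,
    2 * r * ln s - ln 2 - ln (2 / K.+1%:R) <=
    ln (threshold K r s snr) - (2 * r - 1) * ln snr <=
    2 * r * ln (1 + s) - ln (2 / K.+1%:R).
Proof.
move=> r0 s0; near=> snr.
have snr1 : 1 <= snr by near: snr; apply: nbhs_pinfty_ge; rewrite num_real.
have big : ln 2 / (2 * r) - ln s <= ln snr by near: snr; exact: nbhs_pinfty_ln_ge.
have snr0 : 0 < snr by lra.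
rewrite ln_threshold //.
have /andP[L1 L2] := ln1pM_bounds snr1 s0.
have ln2 : ln 2 <= 2 * rate r s snr.
  rewrite /rate; move: big; rewrite lerBlDr ler_pdivrMr ?mulr_gt0 //; nra.
have /andP[M1 M2] := ln_expR_sub1_bounds ln2.
rewrite /rate in M1 M2; apply/andP; split; nra.
Unshelve. all: by end_near.
Qed.

Lemma threshold_mul_le1 (R : realType) (K : nat) (r s L : R) :
  0 < r < 1 / 2 -> 0 < s -> 0 < L ->
  \forall snr \near +oo, L * threshold K r s snr <= 1.
Proof.
move=> /andP[r0 r12] s0 L0; near=> snr.
set b := 2 * r * ln (1 + s) - ln (2 / K.+1%:R).
have /andP[_ gap] : 2 * r * ln s - ln 2 - ln (2 / K.+1%:R) <=
    ln (threshold K r s snr) - (2 * r - 1) * ln snr <= b.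
  by near: snr; exact: ln_threshold_gap.
have big : (ln L + b) / (1 - 2 * r) <= ln snr by near: snr; exact: nbhs_pinfty_ln_ge.
have snr0 : 0 < snr by near: snr; apply: nbhs_pinfty_gt; rewrite num_real.
have t0 := threshold_gt0 K r0 s0 snr0.
have Lt0 : 0 < L * threshold K r s snr by rewrite mulr_gt0.
rewrite -ler_ln ?posrE // ln1 lnM ?posrE //.
move: big; rewrite ler_pdivrMr; last lra.
lra.
Unshelve. all: by end_near.
Qed.

Lemma ln_sandwich (R : realType) (n : nat) (c1 c2 t p : R) : 0 < c1 -> 0 < t ->
  c1 * t ^+ n <= p <= c2 * t ^+ n -> ln c1 <= ln p - n%:R * ln t <= ln c2.
Proof.
move=> c10 t0 /andP[lo up]; have tn : 0 < t ^+ n by rewrite exprn_gt0.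
have p0 : 0 < p by apply: lt_le_trans lo; rewrite mulr_gt0.
have c20 : 0 < c2 by move: (lt_le_trans p0 up); rewrite pmulr_lgt0.
have ln_ct c : 0 < c -> ln (c * t ^+ n) = ln c + n%:R * ln t.
  by move=> c0; rewrite lnM ?posrE // lnXn // mulr_natl.
have h1 : ln c1 + n%:R * ln t <= ln p by rewrite -ln_ct // ler_ln ?posrE ?mulr_gt0.
have h2 : ln p <= ln c2 + n%:R * ln t by rewrite -ln_ct // ler_ln ?posrE ?mulr_gt0.
by apply/andP; split; lra.
Qed.

Theorem theorem1 (d : measure_display) (T : measurableType d) (R : realType)
  (P : probability T R) (K : nat) (r : R)
  (g : 'I_(K.+2) -> 'I_(K.+2) -> T -> R)
  (sigma2 : 'I_(K.+2) -> 'I_(K.+2) -> R) :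
  (1 <= K)%N ->
  0 < r < 1 / 2 ->
  (forall i j, link (i, j) -> 0 < sigma2 i j) ->
  (forall i j, link (i, j) -> measurable_fun setT (g i j)) ->
  (forall i j, link (i, j) -> exponential_rv P (g i j) (sigma2 i j)^-1) ->
  mutually_independent P link (fun p => g p.1 p.2) ->
  (fun snr : R => - ln (fine (P (outage_event g sigma2 r snr))) / ln snr)
     @ +oo --> ((K.+1)%:R * (1 - 2 * r) : R).
Proof.
move=> _ r_range sigma2_gt0 g_meas g_exp g_indep; have /andP[r0 r12] := r_range.
have s0 := sigma2_gt0 _ _ (link_src_dst K).
have [c1 [c2 [c1_gt0 sandwich]]] :=
  outage_prob_sandwich g_meas g_exp g_indep r0 sigma2_gt0.
set n := (K.+1)%:R.
set a := 2 * r * ln (sigma2 src dst) - ln 2 - ln (2 / n).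
set b := 2 * r * ln (1 + sigma2 src dst) - ln (2 / n).
apply: (@cvg_div_ln _ _ (- ln c2 - n * b) (- ln c1 - n * a)).
near=> snr.
have snr0 : 0 < snr by near: snr; apply: nbhs_pinfty_gt; rewrite num_real.
have /andP[ta tb] :
    a <= ln (threshold K r (sigma2 src dst) snr) - (2 * r - 1) * ln snr <= b.
  by near: snr; exact: ln_threshold_gap.
have small : lambda_total sigma2 * threshold K r (sigma2 src dst) snr <= 1.
  by near: snr; apply: threshold_mul_le1 => //; exact: lambda_total_gt0.
have /andP[pa pb] :=
  ln_sandwich c1_gt0 (threshold_gt0 K r0 s0 snr0) (sandwich _ snr0 small).
have n0 : 0 <= n by [].
have := ler_wpM2l n0 ta; have := ler_wpM2l n0 tb.
by move=> *; apply/andP; split; lra.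
Unshelve. all: by end_near.
Qed.
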